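(* Let $P$ be an online minimization problem, let $p^r$ be an $r$-round input distribution with associated round cost functions $\mathrm{cost}_i$, and let $\mathrm{ALG}$ be a deterministic algorithm reading at most $b$ bits of advice on every input in the support of $p^r$. Assume there is a convex and decreasing function $f:[0,\infty]\to\mathbb{R}$ such that for every $1\leq i\leq r$ and every $w\in\mathcal{W}_i$, $$\mathbb{E}[\mathrm{cost}_i(\mathrm{ALG})\mid W_i=w]\geq f\big(D_{KL}(p_{i\mid w}\,\|\,p_i)\big).$$ Then $\mathbb{E}[\mathrm{cost}(\mathrm{ALG})]\geq r\,f(b/r)$.
   Context: For $P$-inputs $\sigma_1,\dots,\sigma_r$, $\sigma_1\cdots\sigma_r$ denotes the input with initial state of $\sigma_1$ and the requests of all $\sigma_i$ concatenated. An $r$-round input distribution: finite sets $I_1,\dots,I_r$ of $P$-inputs such that every $\sigma_1\cdots\sigma_r$ with $\sigma_i\in I_i$ is a valid $P$-input; $I^r$ is the set of all these; for each $i$ a round cost function $\mathrm{cost}_i$ mapping an output $\gamma$ for an input $\sigma\in I^r$ to a non-negative real; distributions $p_i$ on $I_i$ and the product distribution $p^r(\sigma_1\cdots\sigma_r)=\prod_ip_i(\sigma_i)$. With the input drawn from $p^r$: $X_i$ is the round-$i$ part $\sigma_i$; $B$ is the $b$-bit advice string that $\mathrm{ALG}$ receives at the start (the first $b$ bits of the oracle's tape for that input); $\mathrm{cost}_i(\mathrm{ALG})$ is $\mathrm{cost}_i$ of $\mathrm{ALG}$'s output, $\mathrm{cost}(\mathrm{ALG})=\sum_i\mathrm{cost}_i(\mathrm{ALG})$;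 $W_i=(X_1,\dots,X_{i-1},B)$ with $\mathcal{W}_i$ the set of its values of positive probability; $p_{i\mid w}(x)=\Pr[X_i=x\mid W_i=w]$. $D_{KL}(\mu\|\nu)=\sum_\omega\mu(\omega)\log_2(\mu(\omega)/\nu(\omega))$ (with $0\log0=0$). *)

From HB Require Import structures.
From mathcomp Require Import all_boot all_order all_algebra.
From mathcomp Require Import reals exp.
Unset Printing Implicit Defensive.
Import Order.TTheory GRing.Theory Num.Theory.
Local Open Scope ring_scope.

Section Defs.
Variable R : realType.

Definition log2 (x : R) : R := ln x / ln 2.

Definition KL (T : finType) (mu nu : T -> R) : R :=
  \sum_(z : T) (if mu z == 0 then 0 else mu z * log2 (mu z / nu z)).

Variables (r : nat) (I : 'I_r -> finType).

Definition Input := {dffun forall i : 'I_r, I i}.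

Definition is_round_distr (p : forall i : 'I_r, I i -> R) : Prop :=
  (forall i (x : I i), 0 <= p i x) /\ (forall i, \sum_(x : I i) p i x = 1).

Definition prodp (p : forall i : 'I_r, I i -> R) (x : Input) : R :=
  \prod_(i < r) p i (x i).

Variable b : nat.

(* The event W_i = w, where w = (y_1..y_{i-1}, beta) is encoded by an input y
   (only its rounds j < i matter) and an advice string beta. *)
Definition Wevent (adv : Input -> b.-tuple bool) (i : 'I_r) (y : Input)
    (beta : b.-tuple bool) (x : Input) : bool :=
  [forall j : 'I_r, (j < i)%N ==> (x j == y j :> I j)] && (adv x == beta).

Definition PrW p adv i y beta : R :=
  \sum_(x : Input | Wevent adv i y beta x) prodp p x.

Definition condE p adv (c : Input -> R) i y beta : R :=
  (\sum_(x : Input | Wevent adv i y beta x) prodp p x * c x) / PrW p adv i y beta.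

Definition condp p adv i y beta (z : I i) : R :=
  (\sum_(x : Input | Wevent adv i y beta x && (x i == z)) prodp p x)
    / PrW p adv i y beta.

Definition Ecost p (cost : 'I_r -> Input -> R) : R :=
  \sum_(x : Input) prodp p x * \sum_(i < r) cost i x.

End Defs.

Arguments log2 {R}.
Arguments KL {R T}.
Arguments Input {r}.
Arguments is_round_distr {R r I}.
Arguments prodp {R r I}.
Arguments Wevent {r I b}.
Arguments PrW {R r I b}.
Arguments condE {R r I b}.
Arguments condp {R r I b}.
Arguments Ecost {R r I}.

From HB Require Import structures.
From mathcomp Require Import all_boot all_order all_algebra.
From mathcomp Require Import reals exp.
From mathcomp Require Import ring lra.
Import Order.TTheory GRing.Theory Num.Theory.
Local Open Scope ring_scope.

(** Write [I_i = I(X_i; W_i)] for the mutual information between the round-[i] input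
    and the information available before it. Averaging the hypothesis over [W_i]
    and applying Jensen gives [f(I_i) <= E[cost_i]]. By the chain rule the [I_i]
    sum to [I(X; B) <= H(B) <= b], because the rounds are independent under the
    product distribution. A second application of Jensen and the monotonicity of
    [f] then give [r f(b/r) <= r f(sum_i I_i / r) <= sum_i f(I_i) <= E[cost]]. *)

Section RealFacts.
Context {R : realType}.
Implicit Types x y : R.

Definition convex_nonneg (f : R -> R) : Prop :=
  forall x y t, 0 <= x -> 0 <= y -> 0 <= t <= 1 ->
    f (t * x + (1 - t) * y) <= t * f x + (1 - t) * f y.

Lemma ln_le_subr1 x : 0 < x -> ln x <= x - 1.
Proof. by move=> x0; have := @le_ln1Dx R (x - 1); rewrite addrCA subrr addr0; apply; lra. Qed.

Lemma ln2_gt0 : 0 < ln (2 : R).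
Proof. by apply: ln_gt0; lra. Qed.

Lemma log2M x y : 0 < x -> 0 < y -> log2 (x * y) = log2 x + log2 y.
Proof. by move=> x0 y0; rewrite /log2 lnM ?posrE // mulrDl. Qed.

Lemma log2_div x y : 0 < x -> 0 < y -> log2 (x / y) = log2 x - log2 y.
Proof. by move=> x0 y0; rewrite /log2 ln_div ?posrE // mulrBl. Qed.

Lemma log2_prod (T : Type) (s : seq T) (F : T -> R) :
  (forall k, 0 < F k) -> log2 (\prod_(k <- s) F k) = \sum_(k <- s) log2 (F k).
Proof.
move=> F0; elim: s => [|a s IH]; first by rewrite !big_nil /log2 ln1 mul0r.
by rewrite !big_cons log2M ?IH //; apply: prodr_gt0.
Qed.

Lemma log2_exp2 (n : nat) : log2 (2 ^+ n : R) = n%:R.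
Proof. by rewrite /log2 lnXn // -[ln 2 *+ n]mulr_natr mulrAC divff ?mul1r // gt_eqF // ln2_gt0. Qed.

Lemma jensen (T : eqType) (f : R -> R) (w v : T -> R) (s : seq T) :
  convex_nonneg f -> (forall k, 0 <= w k) -> (forall k, 0 <= v k) -> 0 < \sum_(k <- s) w k ->
  (\sum_(k <- s) w k) * f ((\sum_(k <- s) w k * v k) / \sum_(k <- s) w k)
   <= \sum_(k <- s) w k * f (v k).
Proof.
move=> fconv w0 v0; elim: s => [|a s IH]; first by rewrite big_nil ltxx.
rewrite !big_cons.
set W := \sum_(k <- s) w k in IH *; set S := \sum_(k <- s) w k * v k in IH *.
set F := \sum_(k <- s) w k * f (v k) in IH *.
have W0 : 0 <= W by apply: sumr_ge0.
have S0 : 0 <= S by apply: sumr_ge0 => k _; apply: mulr_ge0.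
have [Wz|Wp] := eqVneq W 0.
  have wz k : k \in s -> w k = 0.
    move=> ks; move/eqP: Wz; rewrite psumr_eq0 => [/allP/(_ k ks)/eqP //|k' _].
    exact: w0.
  have [-> ->] : S = 0 /\ F = 0.
    by split; rewrite /S /F big_seq big1 // => k /wz ->; rewrite mul0r.
  by rewrite Wz !addr0 => wa0; rewrite mulrAC divff ?mul1r // gt_eqF.
move=> AWp; have {}IH : W * f (S / W) <= F by apply: IH; rewrite lt_def Wp.
set A := w a in AWp *; have A0 : 0 <= A := w0 a.
set t := A / (A + W).
have t01 : 0 <= t <= 1.
  by apply/andP; split; [apply: divr_ge0; lra | rewrite ler_pdivrMr // mul1r lerDl].
have mixE : (A * v a + S) / (A + W) = t * v a + (1 - t) * (S / W).
  by rewrite /t; field; rewrite !gt_eqF // lt_def Wp.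
have lhsE : (A + W) * (t * f (v a) + (1 - t) * f (S / W)) = A * f (v a) + W * f (S / W).
  by rewrite /t; field; rewrite gt_eqF.
rewrite mixE; apply: le_trans (ler_wpM2l (ltW AWp) (fconv _ _ _ (v0 a) (divr_ge0 S0 W0) t01)) _.
by rewrite lhsE lerD2l.
Qed.

(* Gibbs' inequality, from [mu log2 (mu / nu) >= (mu - nu) / ln 2]. *)
Lemma KL_ge0 (T : finType) (mu nu : T -> R) :
  (forall z, 0 <= mu z) -> (forall z, 0 <= nu z) ->
  \sum_z mu z = 1 -> \sum_z nu z <= 1 -> (forall z, 0 < mu z -> 0 < nu z) ->
  0 <= KL mu nu.
Proof.
move=> mu0 nu0 mu1 nu1 mu_nu; have l2 := ln2_gt0.
have termP z : (mu z - nu z) / ln 2 <= (if mu z == 0 then 0 else mu z * log2 (mu z / nu z)).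
  have [mz|mz] := eqVneq (mu z) 0.
    by rewrite mz sub0r mulNr oppr_le0 divr_ge0 // ltW.
  have mp : 0 < mu z by rewrite lt_def mz mu0.
  have np := mu_nu z mp.
  rewrite /log2 mulrA ler_pM2r ?invr_gt0 // -[mu z / nu z]invf_div lnV ?posrE ?divr_gt0 //.
  have := ler_wpM2l (ltW mp) (ln_le_subr1 _ (divr_gt0 np mp)).
  rewrite mulrBr mulr1 mulrCA mulfV ?mulr1 ?gt_eqF //; lra.
apply: le_trans (ler_sum _ (fun z _ => termP z)).
by rewrite -mulr_suml sumrB mu1 divr_ge0 ?subr_ge0 // ltW.
Qed.

Lemma entropy_le_log_card (T : finType) (q : T -> R) :
  (forall z, 0 <= q z) -> \sum_z q z = 1 ->
  \sum_z q z * - log2 (q z) <= log2 #|T|%:R.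
Proof.
move=> q0 q1; set n : R := #|T|%:R.
have n0 : 0 < n.
  rewrite ltr0n lt0n; apply/negP => /eqP/card0_eq T0.
  by move: q1; rewrite big_pred0 // => /eqP; rewrite eq_sym oner_eq0.
have ninv : 0 < n^-1 by rewrite invr_gt0.
have := @KL_ge0 _ q (fun _ => n^-1) q0 (fun=> ltW ninv) q1.
rewrite sumr_const -/n -[_ *+ _]mulr_natl divff ?gt_eqF // lexx => /(_ isT (fun _ _ => ninv)).
have KLE : KL q (fun _ => n^-1) = \sum_z q z * log2 (q z) + log2 n.
  rewrite -[log2 n]mul1r -q1 mulr_suml -big_split; apply: eq_bigr => z _ /=.
  have [->|qz] := eqVneq (q z) 0; first by rewrite !mul0r addr0.
  by rewrite invrK log2M ?mulrDr // lt_def qz q0.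
rewrite KLE (eq_bigr (fun z => - (q z * - log2 (q z)))) ?sumrN => [|z _]; first lra.
by rewrite mulrN opprK.
Qed.

Lemma jensen_mean {f : R -> R} {n : nat} {v : 'I_n -> R} :
  convex_nonneg f -> (0 < n)%N -> (forall k, 0 <= v k) ->
  n%:R * f ((\sum_(k < n) v k) / n%:R) <= \sum_(k < n) f (v k).
Proof.
move=> fconv n0 v0.
have := @jensen _ f (fun=> 1) v (index_enum 'I_n) fconv (fun=> ler01) v0.
rewrite sumr_const card_ord ltr0n n0 => /(_ isT).
by under eq_bigr do rewrite mul1r; under [X in _ <= X]eq_bigr do rewrite mul1r.
Qed.

End RealFacts.

Section RoundModel.
Context {R : realType} {r : nat} {I : 'I_r -> finType} (p : forall i : 'I_r, I i -> R).
Implicit Types (x y : Input I) (i : 'I_r).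

Lemma sum_prodp :
  \sum_(x : Input I) prodp p x = \prod_(i < r) \sum_(z : I i) p i z.
Proof.
pose q i := [ffun z : I i => p i z].
have -> : \prod_(i < r) \sum_(z : I i) p i z =
  \prod_(i < r) \sum_(j in tagged_with I i) untag 0 (q i) j.
  apply: eq_bigr => i _; rewrite -(big_tag (fun i => q i)).
  by apply: eq_bigr => z _; rewrite ffunE.
rewrite bigA_distr_big_dep -(big_fprod _ _ q).
rewrite (reindex (@dffun_of_fprod _ I)); last exact/onW_bij/dffun_of_fprod_bij.
apply: eq_bigr => t _; apply: eq_bigr => i _.
by rewrite /q !ffunE.
Qed.

Hypothesis p_distr : is_round_distr p.

Lemma prodp_ge0 x : 0 <= prodp p x.
Proof. by case: p_distr => p0 _; apply: prodr_ge0. Qed.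

Lemma sum_prodp_eq1 : \sum_x prodp p x = 1.
Proof. by case: p_distr => _ p1; rewrite sum_prodp big1. Qed.

Lemma prodp_gt0_factor x i : 0 < prodp p x -> 0 < p i (x i).
Proof.
case: p_distr => p0 _ Px; rewrite lt_def p0 andbT; apply: contraTneq Px => pxi.
by rewrite /prodp (bigD1 i) //= pxi mul0r ltxx.
Qed.

Context {b : nat} (adv : Input I -> b.-tuple bool).

(* [cell i x] is the event [W_i = W_i(x)]. *)
Local Notation cell i x := (Wevent adv i x (adv x)).

Lemma Wevent_cell_refl i x : cell i x x.
Proof. by rewrite /Wevent eqxx andbT; apply/forallP => j; apply/implyP. Qed.

Lemma Wevent_cellE {i x x'} : cell i x x' -> cell i x' =1 cell i x.
Proof.
case/andP => /forallP same /eqP -> x''; rewrite /Wevent; congr (_ && _).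
apply: eq_forallb => j; apply: implyb_id2l => ji.
by move/implyP/(_ ji)/eqP: (same j) => ->.
Qed.

Lemma Wevent_cellC i x x' : cell i x x' = cell i x' x.
Proof.
by apply/idP/idP => cx; rewrite (Wevent_cellE cx) Wevent_cell_refl.
Qed.

Lemma PrW_cell {i x x'} : cell i x x' -> PrW p adv i x' (adv x') = PrW p adv i x (adv x).
Proof. by move=> cx; apply: eq_bigl => x''; rewrite (Wevent_cellE cx). Qed.

Lemma PrW_ge0 i y beta : 0 <= PrW p adv i y beta.
Proof. by apply: sumr_ge0 => x _; apply: prodp_ge0. Qed.

Lemma prodp_le_PrW i x : prodp p x <= PrW p adv i x (adv x).
Proof.
rewrite /PrW (bigD1 x) ?Wevent_cell_refl //= lerDl.
by apply: sumr_ge0 => ? _; apply: prodp_ge0.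
Qed.

Lemma PrW_gt0 i x : 0 < prodp p x -> 0 < PrW p adv i x (adv x).
Proof. by move=> Px; apply: lt_le_trans Px (prodp_le_PrW i x). Qed.

(* Tower property of conditional expectation over the cells of [W_i]. *)
Lemma sum_cell_average i (H : Input I -> Input I -> R) :
  (forall x x', cell i x x' -> H x x' = H x' x') ->
  \sum_x prodp p x * ((\sum_(x' | cell i x x') prodp p x' * H x x') / PrW p adv i x (adv x))
  = \sum_x prodp p x * H x x.
Proof.
move=> Hcell; set P := prodp p.
transitivity (\sum_x \sum_(x' | cell i x x') P x' * H x' x' / PrW p adv i x' (adv x') * P x).
  apply: eq_bigr => x _; rewrite mulr_suml mulrC mulr_suml; apply: eq_bigr => x' cx.
  by rewrite Hcell // (PrW_cell cx) mulrAC.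
rewrite (exchange_big_dep xpredT) //=; apply: eq_bigr => x' _.
rewrite (eq_bigl _ _ (fun x => Wevent_cellC i x x')) -mulr_sumr.
have [Pz|Pnz] := eqVneq (P x') 0; first by rewrite Pz !mul0r.
by rewrite mulfVK // gt_eqF // PrW_gt0 // lt_def Pnz prodp_ge0.
Qed.

Lemma condp_cell {i x x'} z :
  cell i x x' -> condp p adv i x' (adv x') z = condp p adv i x (adv x) z.
Proof.
move=> cx; rewrite /condp (PrW_cell cx); congr (_ / _).
by apply: eq_bigl => x''; rewrite (Wevent_cellE cx).
Qed.

Lemma KL_condp_ge0 i y beta : 0 <= KL (condp p adv i y beta) (p i).
Proof.
have [Wz|Wnz] := eqVneq (PrW p adv i y beta) 0.
  by rewrite /KL big1 // => z _; rewrite /condp Wz invr0 mulr0 eqxx.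
have Wpos : 0 < PrW p adv i y beta by rewrite lt_def Wnz PrW_ge0.
case: p_distr => p0 p1; apply: KL_ge0 => [z||||z].
- by apply: divr_ge0 (ltW Wpos); apply: sumr_ge0 => x _; apply: prodp_ge0.
- exact: p0.
- by rewrite /condp -mulr_suml -(partition_big (fun x => x i) xpredT) // divff.
- by rewrite p1.
move=> cz; rewrite lt_def p0 andbT; apply: contraTneq cz => pz.
rewrite /condp big1 ?mul0r ?ltxx // => x /andP[_ /eqP xz].
by rewrite /prodp (bigD1 i) //= xz pz mul0r.
Qed.

Lemma KL_condpE i y beta :
  KL (condp p adv i y beta) (p i) =
  (\sum_(x | Wevent adv i y beta x) prodp p x * log2 (condp p adv i y beta (x i) / p i (x i)))
    / PrW p adv i y beta.
Proof.
rewrite /KL (eq_bigr (fun z => condp p adv i y beta z * log2 (condp p adv i y beta z / p i z))).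
  rewrite (partition_big (fun x => x i) xpredT) // mulr_suml; apply: eq_bigr => z _.
  rewrite /condp mulrAC mulr_suml; congr (_ / _).
  by apply: eq_bigr => x /andP[_ /eqP ->].
by move=> z _; case: eqP => // ->; rewrite mul0r.
Qed.

Definition mutual_info i : R :=
  \sum_x prodp p x * KL (condp p adv i x (adv x)) (p i).

Lemma mutual_info_ge0 i : 0 <= mutual_info i.
Proof. by apply: sumr_ge0 => x _; rewrite mulr_ge0 ?prodp_ge0 ?KL_condp_ge0. Qed.

Lemma mutual_infoE i :
  mutual_info i = \sum_x prodp p x * log2 (condp p adv i x (adv x) (x i) / p i (x i)).
Proof.
rewrite /mutual_info; under eq_bigr do rewrite KL_condpE.
by apply: sum_cell_average => x x' cx; rewrite (condp_cell _ cx).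
Qed.

Lemma convex_mutual_info_le_cost (f : R -> R) (cost : Input I -> R) i :
  convex_nonneg f ->
  (forall y beta, 0 < PrW p adv i y beta ->
     f (KL (condp p adv i y beta) (p i)) <= condE p adv cost i y beta) ->
  f (mutual_info i) <= \sum_x prodp p x * cost x.
Proof.
move=> fconv cell_bound.
have := @jensen _ _ f (prodp p) _ (index_enum (Input I)) fconv prodp_ge0
  (fun x => KL_condp_ge0 i x (adv x)).
rewrite sum_prodp_eq1 ltr01 mul1r divr1 => /(_ isT) /le_trans; apply.
rewrite -(sum_cell_average i (fun _ x' => cost x')) //; apply: ler_sum => x _.
have [Pz|Pnz] := eqVneq (prodp p x) 0; first by rewrite Pz !mul0r.
have Px : 0 < prodp p x by rewrite lt_def Pnz prodp_ge0.
by rewrite ler_pM2l // cell_bound // PrW_gt0.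
Qed.

(* [PrPrefix k x] is [Pr[X_j = x_j for all j < k, B = adv x]]; it equals [PrW] at [k = i]. *)
Definition PrPrefix (k : nat) x : R :=
  \sum_(x' : Input I | [forall j : 'I_r, (j < k)%N ==> (x' j == x j)] && (adv x' == adv x))
    prodp p x'.

Lemma prodp_le_PrPrefix k x : prodp p x <= PrPrefix k x.
Proof.
rewrite /PrPrefix (bigD1 x) /=; last by rewrite eqxx andbT; apply/forallP => j; apply/implyP.
by rewrite lerDl; apply: sumr_ge0 => ? _; apply: prodp_ge0.
Qed.

Lemma PrPrefix_r x : PrPrefix r x = prodp p x.
Proof.
rewrite /PrPrefix (eq_bigl (pred1 x)) ?big_pred1_eq // => x' /=.
apply/andP/eqP => [[/forallP same _]|->]; last by split=> //; apply/forallP => j; apply/implyP.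
by apply/ffunP => j; apply/eqP; apply: (implyP (same j)).
Qed.

Lemma PrPrefix0 x : PrPrefix 0 x = \sum_(x' | adv x' == adv x) prodp p x'.
Proof. by apply: eq_bigl => x'; rewrite (_ : [forall j, _] = true) //; apply/forallP. Qed.

Lemma condp_PrPrefix i x :
  condp p adv i x (adv x) (x i) = PrPrefix i.+1 x / PrPrefix i x.
Proof.
congr (_ / _); apply: eq_bigl => x'; rewrite /Wevent andbAC; congr (_ && _).
apply/andP/forallP => [[/forallP lt_i xi] j|le_i].
  by apply/implyP; rewrite ltnS leq_eqVlt => /orP[/eqP/val_inj->|/(implyP (lt_i j))].
split; last by apply: implyP (le_i i) _.
by apply/forallP => j; apply/implyP => ji; apply: (implyP (le_i j)); apply: ltnW.
Qed.

(* Chain rule: the log-ratios telescope, leaving only the surprisal of the advice. *)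
Lemma sum_log2_condp x : 0 < prodp p x ->
  \sum_i log2 (condp p adv i x (adv x) (x i) / p i (x i)) = - log2 (PrPrefix 0 x).
Proof.
move=> Px; have Qx k : 0 < PrPrefix k x := lt_le_trans Px (prodp_le_PrPrefix k x).
have px i : 0 < p i (x i) := prodp_gt0_factor x i Px.
under eq_bigr => i _.
  rewrite condp_PrPrefix log2_div ?divr_gt0 // log2_div //.
over.
rewrite sumrB -(big_mkord xpredT (fun k => log2 (PrPrefix k.+1 x) - log2 (PrPrefix k x))).
rewrite telescope_sumr // PrPrefix_r -log2_prod //; lra.
Qed.

Lemma advice_entropy_le : \sum_x prodp p x * - log2 (PrPrefix 0 x) <= b%:R.
Proof.
pose q (beta : b.-tuple bool) := \sum_(x | adv x == beta) prodp p x.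
have -> : \sum_x prodp p x * - log2 (PrPrefix 0 x) = \sum_beta q beta * - log2 (q beta).
  rewrite (partition_big adv xpredT) //; apply: eq_bigr => beta _.
  by rewrite /q mulr_suml; apply: eq_bigr => x /eqP adv_x; rewrite PrPrefix0 adv_x.
have q1 : \sum_beta q beta = 1 by rewrite -sum_prodp_eq1 (partition_big adv xpredT).
have q0 beta : 0 <= q beta by apply: sumr_ge0 => x _; apply: prodp_ge0.
apply: le_trans (@entropy_le_log_card _ _ q q0 q1) _.
by rewrite card_tuple card_bool natrX log2_exp2.
Qed.

Lemma sum_mutual_info_le : \sum_i mutual_info i <= b%:R.
Proof.
under eq_bigr do rewrite mutual_infoE.
rewrite exchange_big /=; apply: le_trans advice_entropy_le; apply/ler_sum => x _.
have [->|Pnz] := eqVneq (prodp p x) 0; first by rewrite mul0r big1 // => i _; rewrite mul0r.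
by rewrite -mulr_sumr sum_log2_condp // lt_def Pnz prodp_ge0.
Qed.

End RoundModel.

Theorem theorem7 (R : realType) (r : nat) (I : 'I_r -> finType) (b : nat)
    (p : forall i : 'I_r, I i -> R)
    (adv : Input I -> b.-tuple bool)
    (cost : 'I_r -> Input I -> R)
    (f : R -> R) :
  (0 < r)%N ->
  is_round_distr p ->
  (forall i x, 0 <= cost i x) ->
  (forall x y t, 0 <= x -> 0 <= y -> 0 <= t <= 1 ->
     f (t * x + (1 - t) * y) <= t * f x + (1 - t) * f y) ->
  (forall x y, 0 <= x -> x <= y -> f y <= f x) ->
  (forall (i : 'I_r) (y : Input I) (beta : b.-tuple bool),
     0 < PrW p adv i y beta ->
     f (KL (condp p adv i y beta) (p i)) <= condE p adv (cost i) i y beta) ->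
  r%:R * f (b%:R / r%:R) <= Ecost p cost.
Proof.
(* the costs need not be nonnegative *)
move=> r_gt0 p_distr _ f_convex f_decr cell_bound.
have r_pos : (0 : R) < r%:R by rewrite ltr0n.
have EcostE : Ecost p cost = \sum_i \sum_x prodp p x * cost i x.
  by rewrite /Ecost -exchange_big; apply: eq_bigr => x _; rewrite mulr_sumr.
have info_le_b : \sum_i mutual_info p adv i <= b%:R := sum_mutual_info_le _ p_distr adv.
have info_ge0 i : 0 <= mutual_info p adv i := mutual_info_ge0 _ p_distr adv i.
apply: (@le_trans _ _ (r%:R * f ((\sum_i mutual_info p adv i) / r%:R))).
  by rewrite ler_pM2l // f_decr // ?ler_pM2r ?invr_gt0 // divr_ge0 ?sumr_ge0 ?ltW.
apply: le_trans (jensen_mean f_convex r_gt0 info_ge0) _.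
rewrite EcostE; apply: ler_sum => i _.
exact: (convex_mutual_info_le_cost _ p_distr adv _ _ _ f_convex (cell_bound i)).
Qed.
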